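(* Let $A$ be a Banach algebra and $\phi\in\Delta(A)$. Suppose $A$ is approximately left $\phi$-biprojective and there is an element $a_0\in A$ with $aa_0=a_0a$ for all $a\in A$ and $\phi(a_0)=1$. Then $A$ is approximately left $\phi$-amenable.
   Context: For a Banach algebra $A$, $\Delta(A)$ denotes the set of nonzero multiplicative linear functionals (characters) on $A$. $A\otimes_p A$ is the projective tensor product, a Banach $A$-bimodule via $a\cdot(b\otimes c)=ab\otimes c$, $(b\otimes c)\cdot a=b\otimes ca$; $\pi_A:A\otimes_pA\to A$ is the bounded linear map with $\pi_A(a\otimes b)=ab$. For $\phi\in\Delta(A)$, $A$ is approximately left $\phi$-biprojective if there is a net $(\rho_\alpha)$ of bounded linear maps $A\to A\otimes_pA$ such that for all $a,x\in A$: (i) $\|a\cdot\rho_\alpha(x)-\rho_\alpha(ax)\|\to0$; (ii) $\|\rho_\alpha(xa)-\phi(a)\rho_\alpha(x)\|\to0$; (iii) $\phi(\pi_A(\rho_\alpha(x)))-\phi(x)\to0$. $A$ is approximately left $\phi$-amenable if there is a (not necessarily bounded) net $(a_\alpha)$ in $A$ with $\|aa_\alpha-\phi(a)a_\alpha\|\to0$ for all $a\in A$ and $\phi(a_\alpha)\to1$. *)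

(* Scalars: an arbitrary numFieldType K (covers R and C). *)
From HB Require Import structures.
From mathcomp Require Import all_boot all_order all_algebra.
Set Implicit Arguments. Unset Strict Implicit. Unset Printing Implicit Defensive.
Import Order.TTheory GRing.Theory Num.Theory.
Local Open Scope ring_scope.

HB.mixin Record Lmodule_isNormedSpace (K : numFieldType) V
    of GRing.Lmodule K V & Num.NormedZmodule K V := {
  normZ_ : forall (k : K) (v : V), `|k *: v| = `|k| * `|v|
}.
#[short(type="normedSpaceType")]
HB.structure Definition NormedSpace (K : numFieldType) :=
  { V of Lmodule_isNormedSpace K V & GRing.Lmodule K V & Num.NormedZmodule K V }.

HB.mixin Record NormedSpace_isComplete (K : numFieldType) V of NormedSpace K V := {
  complete_ : forall u : nat -> V,
    (forall e : K, 0 < e -> exists N, forall m n, (N <= m)%N -> (N <= n)%N ->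
        `|u m - u n| < e) ->
    exists l : V, forall e : K, 0 < e -> exists N, forall n, (N <= n)%N ->
        `|u n - l| < e
}.
#[short(type="banachSpaceType")]
HB.structure Definition BanachSpace (K : numFieldType) :=
  { V of NormedSpace_isComplete K V & NormedSpace K V }.

HB.mixin Record BanachSpace_isBanachAlgebra (K : numFieldType) A of BanachSpace K A := {
  bmul : A -> A -> A;
  bmulA : forall a b c, bmul a (bmul b c) = bmul (bmul a b) c;
  bmulDl : forall a b c, bmul (a + b) c = bmul a c + bmul b c;
  bmulDr : forall a b c, bmul a (b + c) = bmul a b + bmul a c;
  bmulZl : forall (k : K) a b, bmul (k *: a) b = k *: bmul a b;
  bmulZr : forall (k : K) a b, bmul a (k *: b) = k *: bmul a b;
  norm_bmul : forall a b, `|bmul a b| <= `|a| * `|b|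
}.
#[short(type="banachAlgebraType")]
HB.structure Definition BanachAlgebra (K : numFieldType) :=
  { A of BanachSpace_isBanachAlgebra K A & BanachSpace K A }.

Section Defs.
Variable K : numFieldType.

Definition is_linear (U V : lmodType K) (f : U -> V) :=
  (forall x y, f (x + y) = f x + f y) /\ (forall (k : K) x, f (k *: x) = k *: f x).

Definition bounded_linear (U V : normedSpaceType K) (f : U -> V) :=
  is_linear f /\ exists C : K, forall x, `|f x| <= C * `|x|.

Definition is_bilinear (U V W : lmodType K) (b : U -> V -> W) :=
  (forall y, is_linear (fun x => b x y)) /\ (forall x, is_linear (b x)).

Definition is_character (A : banachAlgebraType K) (phi : A -> K) :=
  (forall x y, phi (x + y) = phi x + phi y) /\
  (forall (k : K) x, phi (k *: x) = k * phi x) /\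
  (forall x y, phi (bmul x y) = phi x * phi y) /\
  (exists x, phi x != 0).

(* E with the bilinear map tens is the projective tensor product A (x)_p A,
   characterised (up to isometric isomorphism) by its universal property:
   every bounded bilinear map beta with ||beta(a,b)|| <= C||a|| ||b|| into a
   Banach space factors uniquely through a bounded linear T of norm <= C. *)
Definition is_proj_tensor (A : banachAlgebraType K) (E : banachSpaceType K)
    (tens : A -> A -> E) :=
  is_bilinear tens /\
  (forall a b, `|tens a b| <= `|a| * `|b|) /\
  (forall (F : banachSpaceType K) (beta : A -> A -> F) (C : K),
     is_bilinear beta -> (forall a b, `|beta a b| <= C * `|a| * `|b|) ->
     exists T : E -> F,
       [/\ is_linear T, (forall a b, T (tens a b) = beta a b),
           (forall u, `|T u| <= C * `|u|) &
           (forall T' : E -> F, bounded_linear T' ->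
               (forall a b, T' (tens a b) = beta a b) -> forall u, T' u = T u)]).

Definition proj_tensor_bimodule (A : banachAlgebraType K) (E : banachSpaceType K)
    (tens : A -> A -> E) (lact : A -> E -> E) (ract : E -> A -> E) (piA : E -> A) :=
  [/\ is_proj_tensor tens,
      (forall a, bounded_linear (lact a)) /\
        (forall a b c, lact a (tens b c) = tens (bmul a b) c),
      (forall a, bounded_linear (fun u => ract u a)) /\
        (forall a b c, ract (tens b c) a = tens b (bmul c a)) &
      bounded_linear piA /\ (forall a b, piA (tens a b) = bmul a b)].

Record directed := Directed {
  dI :> Type;
  dle : dI -> dI -> Prop;
  dle_refl : forall i, dle i i;
  dle_trans : forall i j k, dle i j -> dle j k -> dle i k;
  dle_dir : forall i j, exists k, dle i k /\ dle j k;
  d_inhab : inhabited dI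
}.

Definition net_to0 (D : directed) (f : D -> K) :=
  forall e : K, 0 < e -> exists i0 : D, forall i : D, dle i0 i -> `|f i| < e.

Definition approx_left_phi_biprojective (A : banachAlgebraType K) (phi : A -> K)
    (E : banachSpaceType K) (tens : A -> A -> E) (lact : A -> E -> E)
    (ract : E -> A -> E) (piA : E -> A) :=
  exists (D : directed) (rho : D -> A -> E),
    (forall i, bounded_linear (rho i)) /\
    (forall a x, net_to0 (fun i => `|lact a (rho i x) - rho i (bmul a x)|)) /\
    (forall a x, net_to0 (fun i => `|rho i (bmul x a) - phi a *: rho i x|)) /\
    (forall x, net_to0 (fun i => phi (piA (rho i x)) - phi x)).

Definition approx_left_phi_amenable (A : banachAlgebraType K) (phi : A -> K) :=
  exists (D : directed) (a : D -> A),
    (forall x, net_to0 (fun i => `|bmul x (a i) - phi x *: a i|)) /\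
    net_to0 (fun i => phi (a i) - 1).

End Defs.

(** The net [piA (rho_i a0)] witnesses approximate left [phi]-amenability.
    Since [piA] is a left module map, [x * piA (rho_i a0) - phi x * piA (rho_i a0)]
    is the image under [piA] of [(x . rho_i a0 - rho_i (x a0)) + (rho_i (a0 x) -
    phi x rho_i a0)], using [x a0 = a0 x]; both summands tend to 0 and [piA]
    is bounded.  Finally [phi (piA (rho_i a0)) -> phi a0 = 1]. *)
From HB Require Import structures.
From mathcomp Require Import all_boot all_order all_algebra.
From mathcomp Require Import ring.
Set Implicit Arguments. Unset Strict Implicit. Unset Printing Implicit Defensive.
Import Order.TTheory GRing.Theory Num.Theory.
Local Open Scope ring_scope.

Section BoundedLinear.
Variable K : numFieldType.

Lemma bounded_linear_gt0 (U V : normedSpaceType K) (f : U -> V) :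
  bounded_linear f -> exists2 C : K, 0 < C & forall x, `|f x| <= C * `|x|.
Proof.
move=> [_ [C HC]]; exists (`|C| + 1).
  by apply: (lt_le_trans ltr01); rewrite lerDr.
move=> x; apply: (le_trans (HC x)).
have Cx_ge0 : 0 <= C * `|x| := le_trans (normr_ge0 _) (HC x).
rewrite -(ger0_norm Cx_ge0) normrM normr_id; apply: ler_wpM2r => //.
by rewrite lerDl.
Qed.

Lemma is_linearB (U V : lmodType K) (f : U -> V) :
  is_linear f -> forall u v, f (u - v) = f u - f v.
Proof. by move=> [fD fZ] u v; rewrite -scaleN1r fD fZ scaleN1r. Qed.

Lemma bounded_linear_comp (U V W : normedSpaceType K) (g : V -> W) (f : U -> V) :
  bounded_linear g -> bounded_linear f -> bounded_linear (fun x => g (f x)).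
Proof.
move=> bg bf; have [Cg Cg0 HCg] := bounded_linear_gt0 bg.
have [Cf _ HCf] := bounded_linear_gt0 bf.
split; first by split=> [x y|k x]; rewrite (bf.1.1, bf.1.2) (bg.1.1, bg.1.2).
exists (Cg * Cf) => x; apply: (le_trans (HCg _)).
by rewrite -mulrA; apply: ler_wpM2l; [exact: ltW|exact: HCf].
Qed.

End BoundedLinear.

Lemma net_to0_le (K : numFieldType) (D : directed) (f g h : D -> K) (M : K) :
  0 < M -> net_to0 f -> net_to0 g ->
  (forall i, `|h i| <= M * (`|f i| + `|g i|)) -> net_to0 h.
Proof.
move=> M_gt0 f0 g0 hle e e_gt0.
have MM_neq0 : M + M != 0 by rewrite -mulr2n mulrn_eq0 /= lt0r_neq0.
have e'_gt0 : 0 < e / (M + M) by rewrite divr_gt0 // addr_gt0.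
have [i1 Hf] := f0 _ e'_gt0; have [i2 Hg] := g0 _ e'_gt0.
have [k [i1k i2k]] := dle_dir i1 i2.
exists k => i ki; apply: (le_lt_trans (hle i)).
have -> : e = M * (e / (M + M) + e / (M + M)) by field.
rewrite ltr_pM2l // ltrD //; [exact: Hf (dle_trans i1k ki)|exact: Hg (dle_trans i2k ki)].
Qed.

Section ProjectiveTensor.
Variables (K : numFieldType) (A : banachAlgebraType K) (E : banachSpaceType K).
Variable tens : A -> A -> E.

(* Both maps are the factorisation of the bounded bilinear map [T1 \o tens]. *)
Lemma proj_tensor_ext (F : banachSpaceType K) (T1 T2 : E -> F) :
  is_proj_tensor tens -> bounded_linear T1 -> bounded_linear T2 ->
  (forall a b, T1 (tens a b) = T2 (tens a b)) -> forall u, T1 u = T2 u.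
Proof.
move=> [[tens_l tens_r] [tens_le univ]] bT1 bT2 T12.
have [C C_gt0 HC] := bounded_linear_gt0 bT1.
have beta_bil : is_bilinear (fun a b => T1 (tens a b)).
  split=> [b|a]; split=> [x y|k x];
    by rewrite ?(tens_l b).1 ?(tens_l b).2 ?(tens_r a).1 ?(tens_r a).2
               ?bT1.1.1 ?bT1.1.2.
have beta_le a b : `|T1 (tens a b)| <= C * `|a| * `|b|.
  apply: (le_trans (HC _)); rewrite -mulrA; apply: ler_wpM2l; first exact: ltW.
  exact: tens_le.
have [T [_ _ _ Tuniq]] := univ F _ C beta_bil beta_le.
by move=> u; rewrite (Tuniq T1 bT1) // (Tuniq T2 bT2).
Qed.

Variables (lact : A -> E -> E) (ract : E -> A -> E) (piA : E -> A).
Hypothesis bimodP : proj_tensor_bimodule tens lact ract piA.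

Lemma piA_lact x u : piA (lact x u) = bmul x (piA u).
Proof.
have [tensP [lact_bl lactE] _ [piA_bl piAE]] := bimodP.
have bmulx_bl : bounded_linear (bmul x).
  split; first by split=> [a b|k a]; rewrite (bmulDr, bmulZr).
  by exists `|x| => a; apply: norm_bmul.
apply: (proj_tensor_ext tensP (bounded_linear_comp piA_bl (lact_bl x))
                        (bounded_linear_comp bmulx_bl piA_bl)) => a b.
by rewrite lactE !piAE bmulA.
Qed.

End ProjectiveTensor.

Theorem proposition2p1 (K : numFieldType) (A : banachAlgebraType K) (phi : A -> K)
    (E : banachSpaceType K) (tens : A -> A -> E) (lact : A -> E -> E)
    (ract : E -> A -> E) (piA : E -> A) :
  is_character phi ->
  proj_tensor_bimodule tens lact ract piA ->
  approx_left_phi_biprojective phi tens lact ract piA ->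
  (exists a0 : A, (forall a : A, bmul a a0 = bmul a0 a) /\ phi a0 = 1) ->
  approx_left_phi_amenable phi.
Proof.
move=> _ bimodP [D [rho [_ [rho_lact [rho_ract rho_phi]]]]] [a0 [a0_central phi_a0]].
have [_ _ _ [piA_bl _]] := bimodP.
have [C C_gt0 HC] := bounded_linear_gt0 piA_bl.
exists D, (fun i => piA (rho i a0)); split; last by have := rho_phi a0; rewrite phi_a0.
move=> x; apply: (net_to0_le C_gt0 (rho_lact x a0) (rho_ract x a0)) => i.
rewrite !normr_id.
set u := lact x (rho i a0) - rho i (bmul x a0).
set v := rho i (bmul a0 x) - phi x *: rho i a0.
have -> : bmul x (piA (rho i a0)) - phi x *: piA (rho i a0) = piA u + piA v.
  rewrite /u /v !(is_linearB piA_bl.1) (piA_lact bimodP) piA_bl.1.2.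
  by rewrite a0_central addrA subrK.
rewrite mulrDr; apply: (le_trans (ler_normD _ _)).
exact: lerD (HC u) (HC v).
Qed.
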